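(* Let $\mathfrak{C}$ be a chromosome-set. For every finite substring $s$ of $\mathfrak{C}$ there exists a unique MES for $\mathfrak{C}$, denoted $MES(s)$, such that $s$ occurs exactly once in $MES(s)$ and every occurrence of $s$ in an element of $\mathfrak{C}$ extends to an occurrence of $MES(s)$ (i.e. lies, at the position of this unique occurrence, inside an occurrence of $MES(s)$ in the same element).
   Context: All strings are over a fixed finite alphabet $\Sigma$. A cyclic string is a bi-infinite periodic word $\mathbb{Z}\to\Sigma$ up to shift, with least period $d$. A finite string is a substring of a cyclic string $c$ if it is a contiguous block of $c$; its occurrences in $c$ are counted by start positions modulo $d$; a cyclic string is a substring only of itself. A chromosome-set is a (possibly infinite) set of cyclic strings; a string is a substring of it if it is a substring of one of its elements. A (finite or cyclic) string $s$ is a multiplicity-extremal substring (MES) for $\mathfrak{C}$ if $s$ is a substring of $\mathfrak{C}$ and every proper superstring $t$ of $s$ (a string $t\neq s$ containing $s$ as a substring) has, in at least one element of $\mathfrak{C}$, strictly fewer occurrences than $s$. *)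

From mathcomp Require Import all_boot.
Set Implicit Arguments. Unset Strict Implicit. Unset Printing Implicit Defensive.

Section Strings.
Variable Sigma : finType.

(* A word w represents a cyclic string (the bi-infinite word ...www...,
   up to shift) with least period size w iff w is primitive: nonempty and
   no nontrivial rotation of w equals w. *)
Definition primitive (w : seq Sigma) : Prop :=
  0 < size w /\ forall k, 0 < k < size w -> rot k w <> w.

(* A (finite or cyclic) string. A cyclic string is given by a representative
   primitive word; two representatives denote the same cyclic string iff they
   are rotations of each other (see str_eq). *)
Inductive str : Type :=
| Fin of seq Sigma
| Cyc of seq Sigma.

Definition wf_str (x : str) : Prop :=
  match x with Fin _ => True | Cyc w => primitive w end.

Definition str_eq (x y : str) : Prop :=
  match x, y with
  | Fin u, Fin v => u = v
  | Cyc u, Cyc v => exists k, v = rot k u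
  | _, _ => False
  end.

Definition cyc_block (w : seq Sigma) (i n : nat) : seq Sigma :=
  take n (flatten (nseq n (rot (i %% size w) w))).

Definition occ_fin_at (s w : seq Sigma) (i : nat) : bool :=
  (i + size s <= size w) && (take (size s) (drop i w) == s).

Definition occ_cyc_at (s w : seq Sigma) (i : nat) : bool :=
  cyc_block w i (size s) == s.

(* number of occurrences of x in y (start positions; modulo the period for
   cyclic y). A cyclic string occurs only in itself, exactly once. *)
Definition occ (x y : str) : nat :=
  match x, y with
  | Fin s, Fin w => count (occ_fin_at s w) (iota 0 (size w).+1)
  | Fin s, Cyc w => count (occ_cyc_at s w) (iota 0 (size w))
  | Cyc _, Fin _ => 0
  | Cyc u, Cyc w => if has (fun k => rot k w == u) (iota 0 (size w)) then 1 else 0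
  end.

(* chromosome-sets: sets of cyclic strings, given by primitive representatives *)
Definition chromosome_set (C : seq Sigma -> Prop) : Prop :=
  forall c, C c -> primitive c.

Definition substring_of_set (C : seq Sigma -> Prop) (x : str) : Prop :=
  exists2 c, C c & 0 < occ x (Cyc c).

Definition MES (C : seq Sigma -> Prop) (x : str) : Prop :=
  substring_of_set C x /\
  forall t : str, wf_str t -> 0 < occ x t -> ~ str_eq t x ->
    exists2 c, C c & occ t (Cyc c) < occ x (Cyc c).

(* The occurrence of the finite string s at position i of the element c
   extends to an occurrence of m: there is an occurrence of m in c (at
   position p, resp. identification c = rot r m for cyclic m) and an
   occurrence of s in m (at offset q) such that this occurrence of s inside
   the occurrence of m is the given one at position i. *)
Definition extends_to (s : seq Sigma) (m : str) (c : seq Sigma) (i : nat) : Prop :=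
  match m with
  | Fin u => exists p q, [/\ p < size c, occ_cyc_at u c p, occ_fin_at s u q
                           & (p + q) %% size c = i]
  | Cyc u => exists r q, [/\ r < size u, c = rot r u, q < size u,
                           occ_cyc_at s u q & (r + i) %% size u = q]
  end.

Definition all_occ_extend (C : seq Sigma -> Prop) (s : seq Sigma) (m : str) : Prop :=
  forall c, C c -> forall i, i < size c -> occ_cyc_at s c i -> extends_to s m c i.

End Strings.

From mathcomp Require Import all_boot ssralg ssrnum ssrint intdiv zify ring.
From Stdlib Require Import Classical.
Set Implicit Arguments. Unset Strict Implicit. Unset Printing Implicit Defensive.
Import GRing.Theory Num.Theory.

(** Read every chromosome as a Z-periodic word and call an offset t common when all
    occurrences of s in C carry the same letter at distance t from their start.  If every
    offset is common, each chromosome containing s is a rotation of the chromosome c0 we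
    started from and contains s once, so MES(s) is the cyclic string c0.  Otherwise the
    common offsets around s form a maximal window [-a, r), and MES(s) is the block of c0
    it covers: s occurs in it only once, since a second occurrence would make every
    offset common; extending it by a letter loses an occurrence in a chromosome that
    witnesses the adjacent uncommon offset; and any other candidate lies inside the window
    and occurs at most as often as the window, which its own MES property forbids unless
    it is the window. *)

Lemma least_counterexample (P : nat -> Prop) n :
  ~ P n -> exists m, (forall k, k < m -> P k) /\ ~ P m.
Proof.
elim/ltn_ind: n => n IH nPn.
case: (classic (forall k, k < n -> P k)) => [allP | /not_all_ex_not [k nk]].
  by exists n.
exact: (IH k (not_imply_elim _ _ nk) (not_imply_elim2 _ _ nk)).
Qed.

Section CountIota.
Variables (n : nat) (P Q : pred nat).

Lemma mem_iota0 i : (i \in iota 0 n) = (i < n).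
Proof. by rewrite mem_iota add0n. Qed.

Lemma count_iota_gt0P : reflect (exists2 i, i < n & P i) (0 < count P (iota 0 n)).
Proof.
rewrite -has_count; apply: (iffP hasP) => -[i].
  by rewrite mem_iota0 => ilt Pi; exists i.
by move=> ilt Pi; exists i; rewrite ?mem_iota0.
Qed.

Lemma count_iota_le1P :
  reflect (forall i j, i < n -> j < n -> P i -> P j -> i = j) (count P (iota 0 n) <= 1).
Proof.
have memF i : (i \in filter P (iota 0 n)) = P i && (i < n) by rewrite mem_filter mem_iota0.
have uniqF : uniq (filter P (iota 0 n)) by rewrite filter_uniq ?iota_uniq.
rewrite -size_filter; apply: (iffP idP) => [le1 i j ilt jlt Pi Pj | uniqP].
  apply/eqP; apply: contraLR le1 => neq; rewrite -ltnNge.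
  apply: (@uniq_leq_size _ [:: i; j]) => [|k]; first by rewrite /= inE neq.
  by rewrite !inE memF => /orP[] /eqP->; apply/andP.
move: uniqF memF; case: (filter P (iota 0 n)) => [|x [|y l]] //= /andP[+ _] memF.
have /andP[Px xlt] : P x && (x < n) by rewrite -memF inE eqxx.
have /andP[Py ylt] : P y && (y < n) by rewrite -memF !inE eqxx orbT.
by rewrite (uniqP x y) ?inE ?eqxx.
Qed.

Lemma count_iota_ge (l : seq nat) :
  uniq l -> (forall i, i \in l -> (i < n) && Q i) -> size l <= count Q (iota 0 n).
Proof.
move=> uniql lQ; rewrite -size_filter; apply: uniq_leq_size => // i /lQ /andP[ilt Qi].
by rewrite mem_filter mem_iota0 Qi.
Qed.

Variable f : nat -> nat.
Hypothesis fPQ : forall i, i < n -> P i -> (f i < n) && Q (f i).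
Hypothesis f_inj : forall i j, i < n -> j < n -> P i -> P j -> f i = f j -> i = j.

Let uniq_image : uniq (map f (filter P (iota 0 n))).
Proof.
rewrite map_inj_in_uniq ?filter_uniq ?iota_uniq // => i j.
by rewrite !mem_filter !mem_iota0 => /andP[Pi ilt] /andP[Pj jlt]; apply: f_inj.
Qed.

Let image_Q i : i \in map f (filter P (iota 0 n)) -> (i < n) && Q i.
Proof. by case/mapP=> j; rewrite mem_filter mem_iota0 => /andP[Pj jlt] ->; apply: fPQ. Qed.

Lemma count_iota_le_inj : count P (iota 0 n) <= count Q (iota 0 n).
Proof. by rewrite -size_filter -(size_map f); apply: count_iota_ge. Qed.

Lemma count_iota_lt_inj j0 : j0 < n -> Q j0 -> (forall i, i < n -> P i -> f i <> j0) ->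
  count P (iota 0 n) < count Q (iota 0 n).
Proof.
move=> j0lt Qj0 f_j0; rewrite -size_filter -(size_map f).
apply: (@count_iota_ge (j0 :: _)) => [|i].
  rewrite /= uniq_image andbT; apply/mapP => -[i].
  by rewrite mem_filter mem_iota0 => /andP[Pi ilt] /esym; apply: f_j0.
by rewrite inE => /predU1P[->|/image_Q]; rewrite ?j0lt.
Qed.

End CountIota.

Section CyclicWords.
Variables (Sigma : finType) (x0 : Sigma).
Local Open Scope ring_scope.
Implicit Types (c v w : seq Sigma) (x y t : int).

Lemma absz_modz x (n : nat) : (0 < n)%N -> `|(x %% n)%Z|%N = (x %% n)%Z :> int.
Proof. by move=> n_gt0; lia. Qed.

Lemma absz_modz_lt x (n : nat) : (0 < n)%N -> (`|(x %% n)%Z| < n)%N.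
Proof. by move=> n_gt0; lia. Qed.

Lemma modn_eq_of_modz (m i n : nat) : (i < n)%N -> (m = i %[mod n])%Z -> (m %% n)%N = i.
Proof. by move=> ilt; rewrite !modz_nat (modn_small ilt) => -[]. Qed.

Lemma eq_of_modz (i j n : nat) : (i < n)%N -> (j < n)%N -> (i = j %[mod n])%Z -> i = j.
Proof. by move=> ilt jlt /(modn_eq_of_modz jlt); rewrite modn_small. Qed.

Definition cyc_nth c x : Sigma := nth x0 c `|(x %% size c)%Z|.

Lemma cyc_nth_mod c x y : (x = y %[mod size c])%Z -> cyc_nth c x = cyc_nth c y.
Proof. by rewrite /cyc_nth => ->. Qed.

Lemma cyc_nthMDr c x (k : int) : cyc_nth c (x + k * size c) = cyc_nth c x.
Proof. by apply: cyc_nth_mod; rewrite addrC modzMDl. Qed.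

Lemma cyc_nth_nat c (i : nat) : (i < size c)%N -> cyc_nth c i = nth x0 c i.
Proof. by move=> ilt; rewrite /cyc_nth modz_nat modn_small. Qed.

Lemma nth_rot_cyc c (j i : nat) : (j <= size c)%N -> (i < size c)%N ->
  nth x0 (rot j c) i = cyc_nth c (j%:Z + i).
Proof.
move=> jle ilt; rewrite nth_cat size_drop; case: ltnP => ij.
  by rewrite nth_drop -PoszD cyc_nth_nat //; lia.
rewrite nth_take; last by lia.
have -> : j%:Z + i = (i - (size c - j))%N%:Z + 1 * (size c)%:Z by lia.
by rewrite cyc_nthMDr cyc_nth_nat; [congr nth; lia | lia].
Qed.

Lemma cyc_nth_rot c (k : nat) x : (k < size c)%N ->
  cyc_nth (rot k c) x = cyc_nth c (k%:Z + x).
Proof.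
move=> klt; have c_gt0 : (0 < size c)%N by apply: leq_ltn_trans klt.
rewrite /cyc_nth size_rot nth_rot_cyc ?(ltnW klt) ?absz_modz_lt // absz_modz //.
by apply: cyc_nth_mod; rewrite modzDmr.
Qed.

Lemma nth_flatten_nseq w m (k : nat) : (k < m * size w)%N ->
  nth x0 (flatten (nseq m w)) k = nth x0 w (k %% size w).
Proof.
elim: m k => [|m IH] k; first by rewrite mul0n.
rewrite mulSn /= nth_cat => klt; case: ltnP => [kw | kge]; first by rewrite modn_small.
by rewrite IH ?ltn_subLR // -{2}(subnK kge) modnDr.
Qed.

Lemma size_cyc_block c (i m : nat) : (0 < size c)%N -> size (cyc_block c i m) = m.
Proof.
move=> c_gt0; rewrite size_take size_flatten /shape map_nseq size_rot.
have -> : sumn (nseq m (size c)) = (m * size c)%N by elim: m => //= m ->; rewrite mulSn.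
by case: ltnP => // le; apply/eqP; rewrite eqn_leq le leq_pmulr.
Qed.

Lemma nth_cyc_block c (i m k : nat) : (0 < size c)%N -> (k < m)%N ->
  nth x0 (cyc_block c i m) k = cyc_nth c (i%:Z + k).
Proof.
move=> c_gt0 klt; have ilt : (i %% size c < size c)%N by rewrite ltn_pmod.
rewrite nth_take // nth_flatten_nseq; last by rewrite size_rot (leq_trans klt) ?leq_pmulr.
rewrite size_rot nth_rot_cyc ?(ltnW ilt) ?ltn_pmod //; apply: cyc_nth_mod.
by rewrite -!PoszD !modz_nat modnDm.
Qed.

Definition occurs_at v c x : Prop :=
  forall k : nat, (k < size v)%N -> cyc_nth c (x + k) = nth x0 v k.

Lemma occ_cyc_atP v c (i : nat) : (0 < size c)%N -> occ_cyc_at v c i <-> occurs_at v c i.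
Proof.
move=> c_gt0; rewrite /occ_cyc_at; split=> [/eqP blk k klt | vi].
  by rewrite -[in RHS]blk nth_cyc_block.
apply/eqP/(@eq_from_nth _ x0) => [|k]; rewrite size_cyc_block // => klt.
by rewrite nth_cyc_block // vi.
Qed.

Lemma occurs_at_mod v c x y :
  (x = y %[mod size c])%Z -> occurs_at v c x -> occurs_at v c y.
Proof.
move=> xy vx k klt; rewrite -vx //; apply: cyc_nth_mod.
by rewrite -modzDml -xy modzDml.
Qed.

Lemma occ_fin_atP v w (j : nat) : occ_fin_at v w j <->
  (j + size v <= size w)%N /\ forall k, (k < size v)%N -> nth x0 w (j + k) = nth x0 v k.
Proof.
split=> [/andP[le /eqP blk] | [le vj]].
  by split=> // k klt; rewrite -[in RHS]blk nth_take // nth_drop.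
have size_blk : size (take (size v) (drop j w)) = size v by rewrite size_takel ?size_drop; lia.
rewrite /occ_fin_at le; apply/eqP/(@eq_from_nth _ x0) => // k.
by rewrite size_blk => klt; rewrite nth_take // nth_drop vj.
Qed.

Lemma occ_fin_at_le v w j : occ_fin_at v w j -> (j <= size w)%N.
Proof. by case/andP=> le _; apply: leq_trans le; apply: leq_addr. Qed.

Lemma occ_fin_eq1_uniq v w j j' : occ (Fin v) (Fin w) = 1%N ->
  occ_fin_at v w j -> occ_fin_at v w j' -> j = j'.
Proof.
move=> occ1 vj vj'.
have /count_iota_le1P uniqv : (occ (Fin v) (Fin w) <= 1)%N by rewrite occ1.
by apply: uniqv; rewrite ?ltnS ?(occ_fin_at_le vj) ?(occ_fin_at_le vj').
Qed.

Lemma occurs_in_fin v w c (j : nat) x :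
  occ_fin_at v w j -> occurs_at w c x -> occurs_at v c (x + j).
Proof.
case/occ_fin_atP => le vj wx k klt.
by rewrite -addrA -PoszD wx -?vj //; lia.
Qed.

Let pos c x : nat := `|(x %% size c)%Z|.

Let pos_lt c x : (0 < size c)%N -> (pos c x < size c)%N.
Proof. exact: absz_modz_lt. Qed.

Let pos_mod c x : (0 < size c)%N -> (pos c x = x %[mod size c])%Z.
Proof. by move=> c_gt0; rewrite absz_modz // modz_mod. Qed.

Lemma occ_cyc_at_absz v c x : (0 < size c)%N -> occurs_at v c x ->
  occ_cyc_at v c `|(x %% size c)%Z|.
Proof. by move=> c_gt0 vx; apply/occ_cyc_atP/(occurs_at_mod _ vx); rewrite ?pos_mod. Qed.

Lemma occ_cyc_gt0 v c x :
  (0 < size c)%N -> occurs_at v c x -> (0 < occ (Fin v) (Cyc c))%N.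
Proof.
by move=> c_gt0 vx; apply/count_iota_gt0P; exists (pos c x); rewrite ?pos_lt ?occ_cyc_at_absz.
Qed.

Lemma occ_cyc_gt0P v c :
  (0 < size c)%N -> (0 < occ (Fin v) (Cyc c))%N -> exists x, occurs_at v c x.
Proof. by move=> c_gt0 /count_iota_gt0P[i _ /(occ_cyc_atP _ _ c_gt0) vi]; exists i. Qed.

Lemma occ_cyc_le1P v c : (0 < size c)%N ->
  (occ (Fin v) (Cyc c) <= 1)%N <->
  forall x y, occurs_at v c x -> occurs_at v c y -> (x = y %[mod size c])%Z.
Proof.
move=> c_gt0; split=> [/count_iota_le1P uniqv x y vx vy | uniqv].
  by rewrite -pos_mod // -(pos_mod y) // (uniqv (pos c x) (pos c y)) ?pos_lt ?occ_cyc_at_absz.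
apply/count_iota_le1P => i j ilt jlt /(occ_cyc_atP _ _ c_gt0) vi /(occ_cyc_atP _ _ c_gt0) vj.
exact: eq_of_modz ilt jlt (uniqv _ _ vi vj).
Qed.

Section Shift.
Variables (v v' c : seq Sigma) (d : int).
Hypothesis c_gt0 : (0 < size c)%N.
Hypothesis shift_occ : forall x, occurs_at v c x -> occurs_at v' c (x + d).

Let shift_pos_occ (i : nat) : (i < size c)%N -> occ_cyc_at v c i ->
  (pos c (i%:Z + d) < size c)%N && occ_cyc_at v' c (pos c (i%:Z + d)).
Proof. by move=> _ /(occ_cyc_atP _ _ c_gt0) /shift_occ vd; rewrite pos_lt ?occ_cyc_at_absz. Qed.

Let shift_pos_inj (i j : nat) : (i < size c)%N -> (j < size c)%N ->
  pos c (i%:Z + d) = pos c (j%:Z + d) -> i = j.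
Proof.
move=> ilt jlt eq_pos; apply: (eq_of_modz ilt jlt).
by apply/eqP; rewrite -(eqz_modDr d) -pos_mod // eq_pos pos_mod.
Qed.

Lemma occ_cyc_le_shift : (occ (Fin v) (Cyc c) <= occ (Fin v') (Cyc c))%N.
Proof. by apply: (count_iota_le_inj shift_pos_occ) => i j ilt jlt _ _; apply: shift_pos_inj. Qed.

Lemma occ_cyc_lt_shift y : occurs_at v' c y ->
  (forall x, occurs_at v c x -> ~ (x + d = y %[mod size c])%Z) ->
  (occ (Fin v) (Cyc c) < occ (Fin v') (Cyc c))%N.
Proof.
move=> v'y not_y.
apply: (count_iota_lt_inj shift_pos_occ _ (pos_lt y c_gt0) (occ_cyc_at_absz c_gt0 v'y)).
  by move=> i j ilt jlt _ _; apply: shift_pos_inj.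
move=> i ilt /(occ_cyc_atP _ _ c_gt0) vi eq_pos; apply: (not_y _ vi).
by rewrite -pos_mod // eq_pos pos_mod.
Qed.

End Shift.

Lemma occ_superstring_lt u w (j : nat) c x y : (0 < size c)%N ->
  occ_fin_at u w j -> occurs_at u c x -> 0 <= j%:Z + y < size w ->
  cyc_nth c (x + y) <> nth x0 w `|j%:Z + y| ->
  (occ (Fin w) (Cyc c) < occ (Fin u) (Cyc c))%N.
Proof.
move=> c_gt0 uw ux y_range neq.
apply: (occ_cyc_lt_shift c_gt0 (fun p wp => occurs_in_fin uw wp) ux) => p wp px; apply: neq.
rewrite -wp; last by lia.
have -> : `|j%:Z + y|%:Z = j%:Z + y by lia.
by apply: cyc_nth_mod; rewrite addrA -modzDml -px modzDml.
Qed.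

Lemma occ_cyc_cyc_le1 u w : (occ (Cyc u) (Cyc w) <= 1)%N.
Proof. by rewrite /=; case: ifP. Qed.

Lemma occ_cyc_cyc_gt0P u w :
  (0 < occ (Cyc u) (Cyc w))%N <-> exists2 k, (k < size w)%N & rot k w = u.
Proof.
rewrite /=; case: hasP => [[k] | no_rot].
  by rewrite mem_iota0 => klt /eqP rot_u; split=> // _; exists k.
by split=> // -[k klt rot_u]; case: no_rot; exists k; rewrite ?mem_iota0 ?rot_u.
Qed.

End CyclicWords.

Section PrimitiveWords.
Variables (Sigma : finType) (x0 : Sigma).
Local Open Scope ring_scope.
Implicit Types (c : seq Sigma) (x y t : int).
Local Notation cyc_nth := (cyc_nth x0).

Lemma primitive_size_gt0 c : primitive c -> (0 < size c)%N.
Proof. by case. Qed.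

Lemma primitive_aperiodic c (p : nat) : primitive c -> (0 < p < size c)%N ->
  ~ (forall t, cyc_nth c (t + p) = cyc_nth c t).
Proof.
case=> _ not_rot p_range per; have /andP[_ plt] := p_range; apply: (not_rot p p_range).
apply: (@eq_from_nth _ x0) => [|i]; rewrite size_rot // => ilt.
by rewrite nth_rot_cyc ?(ltnW plt) // addrC per cyc_nth_nat.
Qed.

Lemma primitive_agree_mod c x y : primitive c ->
  (forall t, cyc_nth c (x + t) = cyc_nth c (y + t)) -> (x = y %[mod size c])%Z.
Proof.
move=> prim_c agree; have c_gt0 := primitive_size_gt0 prim_c.
apply: NNPP => neq; set p := `|((y - x) %% size c)%Z|%N.
have p_eq : p = ((y - x) %% size c)%Z :> int by rewrite absz_modz.
have p_gt0 : (0 < p)%N.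
  rewrite lt0n; apply/eqP => p0; apply: neq; apply/eqP.
  by rewrite eq_sym eqz_mod_dvd; apply/dvdz_mod0P; rewrite -p_eq p0.
apply: (primitive_aperiodic prim_c _ (p := p)) => [|t]; first by rewrite p_gt0 absz_modz_lt.
rewrite -[in RHS](subrKC x t) agree; apply: cyc_nth_mod.
by rewrite p_eq modzDmr; congr modz; ring.
Qed.

Lemma primitive_agree_size c c' x y : primitive c -> primitive c' ->
  (forall t, cyc_nth c (x + t) = cyc_nth c' (y + t)) -> size c = size c'.
Proof.
suff lt_size d d' u v : primitive d -> primitive d' ->
    (forall t, cyc_nth d (u + t) = cyc_nth d' (v + t)) -> ~ (size d < size d')%N.
  move=> pc pc' agree; case: (ltngtP (size c) (size c')) => [lt|lt|//].
    by case: (lt_size _ _ _ _ pc pc' agree lt).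
  by case: (lt_size _ _ _ _ pc' pc (fun t => esym (agree t)) lt).
move=> pd pd' agree lt; apply: (primitive_aperiodic pd' _ (p := size d)) => [|t].
  by rewrite primitive_size_gt0.
have -> : t + size d = v + (t - v + 1 * (size d)%:Z) by ring.
rewrite -agree addrA cyc_nthMDr agree; congr cyc_nth; ring.
Qed.

Lemma primitive_agree_rot c c' x y : primitive c -> primitive c' ->
  (forall t, cyc_nth c (x + t) = cyc_nth c' (y + t)) ->
  exists2 k, (k < size c')%N & c = rot k c' /\ (k%:Z + x = y %[mod size c'])%Z.
Proof.
move=> pc pc' agree; have c'_gt0 := primitive_size_gt0 pc'.
have size_c := primitive_agree_size pc pc' agree.
set k := `|((y - x) %% size c')%Z|%N.
have k_eq : k = ((y - x) %% size c')%Z :> int by rewrite absz_modz.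
exists k; first exact: absz_modz_lt.
split; last by rewrite k_eq modzDml; congr modz; ring.
apply: (@eq_from_nth _ x0) => [|i]; rewrite ?size_rot // size_c => ilt.
rewrite nth_rot_cyc ?(ltnW (absz_modz_lt _ _)) // -cyc_nth_nat ?size_c //.
by rewrite -(subrKC x i) agree; apply: cyc_nth_mod; rewrite k_eq modzDml; congr modz; ring.
Qed.

End PrimitiveWords.

Section MESFacts.
Variables (Sigma : finType) (C : seq Sigma -> Prop).

Lemma MES_cyc c : (0 < size c)%N -> C c -> MES C (Cyc c).
Proof.
move=> c_gt0 Cc; split.
  by exists c => //; apply/occ_cyc_cyc_gt0P; exists 0%N; rewrite ?rot0.
move=> [w|w] _ //= /occ_cyc_cyc_gt0P[k _ rot_c] neq.
by case: neq; exists k.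
Qed.

Lemma MES_superstring_eq m' m : MES C m' -> wf_str m -> (0 < occ m' m)%N ->
  (forall c, C c -> (occ m' (Cyc c) <= occ m (Cyc c))%N) -> str_eq m m'.
Proof.
case=> _ mes wf_m pos le; apply: NNPP => neq; have [c Cc] := mes m wf_m pos neq.
by rewrite ltnNge le.
Qed.

End MESFacts.

Section MESOfSubstring.
Variables (Sigma : finType) (x0 : Sigma) (C : seq Sigma -> Prop).
Hypothesis primC : chromosome_set C.
Variables (s c0 : seq Sigma) (i0 : nat).
Hypotheses (C_c0 : C c0) (i0_lt : (i0 < size c0)%N) (s_c0 : occ_cyc_at s c0 i0).
Local Open Scope ring_scope.
Local Notation cyc_nth := (cyc_nth x0).
Local Notation occurs_at := (occurs_at x0).
Local Notation z0 := (i0%:Z).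
Implicit Types (c : seq Sigma) (x y z t : int).

Definition s_at c z : Prop := C c /\ occurs_at s c z.

Definition common_offset t : Prop :=
  forall c z, s_at c z -> cyc_nth c (z + t) = cyc_nth c0 (z0 + t).

Let c0_gt0 : (0 < size c0)%N := primitive_size_gt0 (primC C_c0).

Lemma s_at_size_gt0 c z : s_at c z -> (0 < size c)%N.
Proof. by case=> /primC /primitive_size_gt0. Qed.

Lemma s_at_nat c (i : nat) : C c -> occ_cyc_at s c i -> s_at c i.
Proof. by move=> Cc si; split=> //; apply/(occ_cyc_atP x0 _ _ (primitive_size_gt0 (primC Cc))). Qed.

Lemma s_at_c0 : s_at c0 z0.
Proof. exact: s_at_nat. Qed.

Lemma s_at_mod c x y : (x = y %[mod size c])%Z -> s_at c x -> s_at c y.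
Proof. by move=> xy [Cc sx]; split=> //; apply: occurs_at_mod sx. Qed.

Lemma common_offset_in_s (k : nat) : (k < size s)%N -> common_offset k.
Proof. by move=> klt c z [_ sz]; rewrite sz // (proj2 s_at_c0). Qed.

Lemma uncommon_witness t : ~ common_offset t ->
  exists c z, s_at c z /\ cyc_nth c (z + t) <> cyc_nth c0 (z0 + t).
Proof.
move=> uncommon; apply: NNPP => none; apply: uncommon => c z sz.
by apply: NNPP => neq; apply: none; exists c, z.
Qed.

Lemma uncommon_both_sides t : ~ common_offset t ->
  (exists n : nat, ~ common_offset n) /\ (exists n : nat, ~ common_offset (- n.+1%:Z)).
Proof.
case/uncommon_witness=> c [z [sz neq]].
have uncommon_shift (m : int) : ~ common_offset (t + m * (size c * size c0)%N).
  move=> common_m; apply: neq; move: (common_m c z sz).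
  have -> : z + (t + m * (size c * size c0)%N) = z + t + (m * size c0) * size c.
    by rewrite PoszM; ring.
  have -> : z0 + (t + m * (size c * size c0)%N) = z0 + t + (m * size c) * size c0.
    by rewrite PoszM; ring.
  by rewrite !cyc_nthMDr.
have N_gt0 : (0 < size c * size c0)%N by rewrite muln_gt0 (s_at_size_gt0 sz) c0_gt0.
move: uncommon_shift N_gt0; set N := (size c * size c0)%N => uncommon_shift N_gt0.
split; [exists (absz (t + `|t| * N)) | exists (absz (t - (`|t| + 1) * N)).-1].
- by have -> : absz (t + `|t| * N) = t + `|t| * N :> int by nia.
- have -> : - (absz (t - (`|t| + 1) * N)).-1.+1%:Z = t + (- (`|t| + 1)) * N by nia.
  exact: uncommon_shift.
Qed.

Lemma extend_fin_occurs u (q : nat) c z : all_occ_extend C s (Fin u) ->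
  occ (Fin s) (Fin u) = 1%N -> occ_fin_at s u q -> s_at c z -> occurs_at u c (z - q%:Z).
Proof.
move=> ext occ1 squ [Cc sz]; have c_gt0 := primitive_size_gt0 (primC Cc).
have [p [q' [_ up sq' pq]]] :=
  ext c Cc _ (absz_modz_lt z c_gt0) (occ_cyc_at_absz c_gt0 sz).
rewrite -(occ_fin_eq1_uniq occ1 sq' squ).
apply: (occurs_at_mod _ ((occ_cyc_atP x0 _ _ c_gt0).1 up)).
apply/eqP; rewrite -(eqz_modDr q') subrK; apply/eqP.
by rewrite -PoszD modz_nat pq absz_modz // modz_mod.
Qed.

Lemma extend_fin_common u (q : nat) : all_occ_extend C s (Fin u) ->
  occ (Fin s) (Fin u) = 1%N -> occ_fin_at s u q ->
  forall t, - q%:Z <= t < (size u)%:Z - q%:Z -> common_offset t.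
Proof.
move=> ext occ1 squ t t_range c z sz.
have k_eq : (absz (t + q%:Z))%:Z = t + q%:Z by lia.
have k_lt : (absz (t + q%:Z)%R < size u)%N by lia.
have shift x : x + t = x - q%:Z + absz (t + q%:Z) by rewrite k_eq; ring.
by rewrite !shift (extend_fin_occurs ext occ1 squ sz) ?(extend_fin_occurs ext occ1 squ s_at_c0).
Qed.

Lemma extend_cyc_common w : all_occ_extend C s (Cyc w) -> occ (Fin s) (Cyc w) = 1%N ->
  forall t, common_offset t.
Proof.
move=> ext occ1.
have [q q_lt sq] : exists2 q, (q < size w)%N & occ_cyc_at s w q.
  by apply/count_iota_gt0P; move: occ1 => /= ->.
have /count_iota_le1P uniq_s : (occ (Fin s) (Cyc w) <= 1)%N by rewrite occ1.
have agree c z : s_at c z -> forall t, cyc_nth c (z + t) = cyc_nth w (q%:Z + t).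
  move=> [Cc sz] t; have c_gt0 := primitive_size_gt0 (primC Cc).
  have [r [q' [r_lt c_rot q'_lt sq' rq']]] :=
    ext c Cc _ (absz_modz_lt z c_gt0) (occ_cyc_at_absz c_gt0 sz).
  rewrite (uniq_s q' q) // in rq'.
  have size_c : size c = size w by rewrite c_rot size_rot.
  rewrite size_c in rq' c_gt0.
  have rzq : (r%:Z + z = q %[mod size w])%Z.
    by rewrite -modzDmr -(absz_modz z c_gt0) -PoszD !modz_nat rq' modn_small.
  rewrite c_rot cyc_nth_rot // addrA; apply: cyc_nth_mod.
  by rewrite -[LHS]modzDml rzq modzDml.
by move=> t c z sz; rewrite (agree _ _ sz) (agree _ _ s_at_c0).
Qed.

Section AllOffsetsCommon.
Hypothesis all_common : forall t, common_offset t.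

Lemma all_common_mod c x y : s_at c x -> s_at c y -> (x = y %[mod size c])%Z.
Proof.
move=> sx sy; apply: (primitive_agree_mod (x0 := x0) (primC sx.1)) => t.
by rewrite (all_common _ sx) (all_common _ sy).
Qed.

Lemma occ_s_c0 : occ (Fin s) (Cyc c0) = 1%N.
Proof.
apply/eqP; rewrite eqn_leq (occ_cyc_gt0 c0_gt0 (proj2 s_at_c0)) andbT.
by apply/(occ_cyc_le1P x0 _ c0_gt0) => x y sx sy; apply: all_common_mod.
Qed.

Lemma all_occ_extend_c0 : all_occ_extend C s (Cyc c0).
Proof.
move=> c Cc i i_lt si; have sz := s_at_nat Cc si.
have [k k_lt [c_rot ki]] :
    exists2 k, (k < size c0)%N & c = rot k c0 /\ (k%:Z + i = i0 %[mod size c0])%Z.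
  by apply: (primitive_agree_rot (x0 := x0) (primC Cc) (primC C_c0)) => t; apply: all_common.
by exists k, i0; split=> //; apply: modn_eq_of_modz.
Qed.

Lemma MES_c0_unique m : wf_str m -> MES C m -> occ (Fin s) m = 1%N ->
  all_occ_extend C s m -> str_eq m (Cyc c0).
Proof.
case: m => [u|w] _ mes occ1 ext; last first.
  by have [r [q [_ c0_rot _ _ _]]] := ext c0 C_c0 i0 i0_lt s_c0; exists r.
have [q _ squ] : exists2 q, (q < (size u).+1)%N & occ_fin_at s u q.
  by apply/count_iota_gt0P; move: occ1 => /= ->.
have uc0 := extend_fin_occurs ext occ1 squ s_at_c0.
suff : str_eq (Cyc c0) (Fin u) by [].
apply: (MES_superstring_eq (m := Cyc c0) mes (primC C_c0) (occ_cyc_gt0 c0_gt0 uc0)) => c Cc.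
have c_gt0 := primitive_size_gt0 (primC Cc).
case: (posnP (occ (Fin u) (Cyc c))) => [-> // | /(occ_cyc_gt0P x0 c_gt0) [x ux]].
have s_in_u y : occurs_at u c y -> s_at c (y + q%:Z).
  by move=> uy; split=> //; apply: occurs_in_fin uy.
have c_c0 : (0 < occ (Cyc c0) (Cyc c))%N.
  apply/occ_cyc_cyc_gt0P; have [k k_lt [c0_rot _]] := primitive_agree_rot (x0 := x0)
    (primC C_c0) (primC Cc) (fun t => esym (all_common t (s_in_u _ ux))).
  by exists k; rewrite ?c0_rot.
have -> : occ (Cyc c0) (Cyc c) = 1%N by apply/eqP; rewrite eqn_leq occ_cyc_cyc_le1.
apply/(occ_cyc_le1P x0 _ c_gt0) => y y' uy uy'.
by apply/eqP; rewrite -(eqz_modDr q); apply/eqP; apply: all_common_mod; apply: s_in_u.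
Qed.

End AllOffsetsCommon.

Section Window.
Variables r a : nat.
Hypothesis window_common : forall t, - a%:Z <= t < r%:Z -> common_offset t.
Hypothesis uncommon_r : ~ common_offset r.
Hypothesis uncommon_a : ~ common_offset (- a.+1%:Z).

Definition window : seq Sigma := mkseq (fun k => cyc_nth c0 (z0 - a%:Z + k%:Z)) (a + r).

Lemma size_window : size window = (a + r)%N.
Proof. exact: size_mkseq. Qed.

Lemma size_s_le_r : (size s <= r)%N.
Proof. by rewrite leqNgt; apply/negP => lt; apply: uncommon_r; apply: common_offset_in_s. Qed.

Lemma window_occurs c z : s_at c z -> occurs_at window c (z - a%:Z).
Proof.
move=> sz k; rewrite size_window => k_lt; rewrite nth_mkseq // -!addrA.
by rewrite (window_common _ sz) //; lia.
Qed.

Lemma s_in_window : occ_fin_at s window a.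
Proof.
have s_le := size_s_le_r.
apply/(occ_fin_atP x0); rewrite size_window; split=> [|k k_lt]; first by lia.
rewrite nth_mkseq; last by lia.
have -> : z0 - a%:Z + (a + k)%N%:Z = z0 + k%:Z by rewrite PoszD; ring.
exact: (proj2 s_at_c0).
Qed.

Lemma s_in_window_uniq j : occ_fin_at s window j -> j = a.
Proof.
(* A second occurrence of s at distance d from the first makes the occurrences of s
   invariant under shifts by multiples of d; every offset then reduces modulo d into
   the window, so r would be common. *)
move=> sj; apply: NNPP => j_neq; apply: uncommon_r.
have j_le : (j <= a + r)%N by rewrite -size_window (occ_fin_at_le sj).
set d := j%:Z - a%:Z.
have d_neq0 : d != 0 by rewrite subr_eq0; apply/eqP => -[].
have shift c z : s_at c z -> s_at c (z + d).
  move=> sz; split; first exact: sz.1.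
  have -> : z + d = z - a%:Z + j%:Z by rewrite /d; ring.
  exact: occurs_in_fin sj (window_occurs sz).
have shift_nat c z (m : nat) : s_at c z -> s_at c (z + m%:Z * d).
  move=> sz; elim: m => [|m IH]; first by rewrite mul0r addr0.
  have -> : z + m.+1%:Z * d = z + m%:Z * d + d by rewrite -addn1 PoszD; ring.
  exact: shift.
have shift_int c z (m : int) : s_at c z -> s_at c (z + m * d).
  move=> sz; apply: (s_at_mod _ (shift_nat c z (absz (m %% size c)%Z) sz)).
  by rewrite absz_modz ?(s_at_size_gt0 sz) // -modzDmr modzMml modzDmr.
set t := r%:Z + a%:Z.
have t_range : - a%:Z <= (t %% d)%Z - a%:Z < r%:Z.
  by have := modz_ge0 t d_neq0; have := ltz_mod t d_neq0; rewrite /d; lia.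
have reduce c z : s_at c z -> cyc_nth c (z + r%:Z) = cyc_nth c0 (z0 + ((t %% d)%Z - a%:Z)).
  move=> sz; have -> : z + r%:Z = z + (t %/ d)%Z * d + ((t %% d)%Z - a%:Z).
    by rewrite addrA -(addrA z) -divz_eq /t; ring.
  exact: window_common t_range _ _ (shift_int _ _ _ sz).
by move=> c z sz; rewrite (reduce _ _ sz) (reduce _ _ s_at_c0).
Qed.

Lemma occ_s_window : occ (Fin s) (Fin window) = 1%N.
Proof.
apply/eqP; rewrite eqn_leq; apply/andP; split.
  by apply/count_iota_le1P => i j _ _ /s_in_window_uniq -> /s_in_window_uniq ->.
by apply/count_iota_gt0P; exists a; rewrite ?s_in_window // ltnS size_window leq_addr.
Qed.

Lemma all_occ_extend_window : all_occ_extend C s (Fin window).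
Proof.
move=> c Cc i i_lt si; have c_gt0 := primitive_size_gt0 (primC Cc).
have uc := window_occurs (s_at_nat Cc si).
exists (absz ((i%:Z - a%:Z) %% size c)%Z), a; split.
- exact: absz_modz_lt.
- exact: occ_cyc_at_absz c_gt0 uc.
- exact: s_in_window.
- by apply: modn_eq_of_modz => //; rewrite PoszD absz_modz // modzDml subrK.
Qed.

Lemma window_superstring_fin w (j : nat) : occ_fin_at window w j -> w <> window ->
  exists2 c, C c & (occ (Fin w) (Cyc c) < occ (Fin window) (Cyc c))%N.
Proof.
move=> ww w_neq; have [w_le _] := (occ_fin_atP x0 _ _ _).1 ww; rewrite size_window in w_le.
have [t [t_uncommon t_range]] : exists t, ~ common_offset t /\ 0 <= j%:Z + a%:Z + t < size w.
  case: (posnP j) => [j0 | j_gt0]; last by exists (- a.+1%:Z); split=> //; lia.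
  exists r; split=> //; suff : (a + r < size w)%N by lia.
  rewrite ltnNge; apply/negP => w_le'; apply: w_neq.
  by move: ww; rewrite /occ_fin_at j0 drop0 size_window take_oversize // => /andP[_ /eqP].
have [c [z [sz t_neq]]] := uncommon_witness t_uncommon.
have [c' [z' [sz' neq']]] :
    exists c' z', s_at c' z' /\ cyc_nth c' (z' + t) <> nth x0 w `|j%:Z + a%:Z + t|.
  case: (eqVneq (cyc_nth c (z + t)) (nth x0 w `|j%:Z + a%:Z + t|)) => [eq_w | /eqP neq_w].
    by exists c0, z0; split; [exact: s_at_c0 | rewrite -eq_w => /esym].
  by exists c, z.
exists c'; first exact: sz'.1.
apply: (occ_superstring_lt (s_at_size_gt0 sz') ww (window_occurs sz') (y := a%:Z + t)).
  by lia.
by rewrite !addrA subrK.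
Qed.

Lemma window_superstring_cyc w :
  exists2 c, C c & (occ (Cyc w) (Cyc c) < occ (Fin window) (Cyc c))%N.
Proof.
(* Otherwise c0 and the chromosome c1 witnessing that r is uncommon are both rotations
   of w, and the occurrence of s in c1 is carried to a second occurrence in c0. *)
apply: NNPP => none.
have le c z : s_at c z -> (occ (Fin window) (Cyc c) <= occ (Cyc w) (Cyc c))%N.
  by move=> sz; rewrite leqNgt; apply/negP => lt; apply: none; exists c => //; case: sz.
have rot_w c z : s_at c z -> exists2 k, (k < size c)%N & rot k c = w.
  move=> sz; apply/occ_cyc_cyc_gt0P; apply: leq_trans (le _ _ sz).
  exact: occ_cyc_gt0 (s_at_size_gt0 sz) (window_occurs sz).
have [c1 [z1 [s1 neq1]]] := uncommon_witness uncommon_r.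
have [k1 k1_lt w1] := rot_w _ _ s1.
have [k0 k0_lt w0] := rot_w _ _ s_at_c0.
have c1_c0 t : cyc_nth c1 t = cyc_nth c0 (k0%:Z + (t - k1%:Z)).
  by rewrite -(cyc_nth_rot _ _ k0_lt) w0 -w1 cyc_nth_rot // subrKC.
have s2 : s_at c0 (k0%:Z + (z1 - k1%:Z)).
  by split=> // k k_lt; rewrite -(proj2 s1 k k_lt) c1_c0; congr cyc_nth; ring.
have window_le1 : (occ (Fin window) (Cyc c0) <= 1)%N.
  exact: leq_trans (le _ _ s_at_c0) (occ_cyc_cyc_le1 _ _).
have /eqP := (occ_cyc_le1P x0 _ c0_gt0).1 window_le1 _ _ (window_occurs s2) (window_occurs s_at_c0).
rewrite eqz_modDr => /eqP z2z0; apply: neq1; rewrite c1_c0; apply: cyc_nth_mod.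
have -> : k0%:Z + (z1 + r%:Z - k1%:Z) = k0%:Z + (z1 - k1%:Z) + r%:Z by ring.
by rewrite -modzDml z2z0 modzDml.
Qed.

Lemma MES_window : MES C (Fin window).
Proof.
split; first by exists c0 => //; exact: occ_cyc_gt0 c0_gt0 (window_occurs s_at_c0).
move=> [w|w] _ pos neq; last exact: window_superstring_cyc.
have /count_iota_gt0P [j _ ww] := pos.
exact: window_superstring_fin ww neq.
Qed.

Lemma MES_window_unique m : wf_str m -> MES C m -> occ (Fin s) m = 1%N ->
  all_occ_extend C s m -> str_eq m (Fin window).
Proof.
(* The extension property confines u to common offsets, so u sits inside the window
   and each of its occurrences extends to one of the window. *)
case: m => [u|w] _ mes occ1 ext; last by case: uncommon_r; apply: (extend_cyc_common ext occ1).
have [q _ squ] : exists2 q, (q < (size u).+1)%N & occ_fin_at s u q.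
  by apply/count_iota_gt0P; move: occ1 => /= ->.
have u_common := extend_fin_common ext occ1 squ.
have [sq_le _] := (occ_fin_atP x0 _ _ _).1 squ.
have q_le : (q <= a)%N.
  by rewrite leqNgt; apply/negP => a_lt; apply: uncommon_a; apply: u_common; lia.
have u_le : (size u <= q + r)%N.
  by rewrite leqNgt; apply/negP => lt; apply: uncommon_r; apply: u_common; lia.
have u_in_window : occ_fin_at u window (a - q).
  apply/(occ_fin_atP x0); rewrite size_window; split=> [|k k_lt]; first by lia.
  rewrite nth_mkseq; last by lia.
  rewrite -(extend_fin_occurs ext occ1 squ s_at_c0) //; congr cyc_nth.
  by rewrite PoszD -subzn //; ring.
have : str_eq (Fin window) (Fin u).
  apply: (MES_superstring_eq (m := Fin window) mes I).
    by apply/count_iota_gt0P; exists (a - q)%N; rewrite // size_window; lia.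
  move=> c Cc; apply: (occ_cyc_le_shift (d := q%:Z - a%:Z) (primitive_size_gt0 (primC Cc))).
  move=> x ux; rewrite addrA; apply: window_occurs.
  by split=> //; apply: occurs_in_fin squ ux.
by move=> /= ->.
Qed.

End Window.

Lemma MES_exists_unique : exists m : str Sigma,
  [/\ wf_str m, MES C m, occ (Fin s) m = 1%N, all_occ_extend C s m &
    forall m', wf_str m' -> MES C m' -> occ (Fin s) m' = 1%N ->
      all_occ_extend C s m' -> str_eq m' m].
Proof.
case: (classic (forall t, common_offset t)) => [all_common | /not_all_ex_not [t uncommon_t]].
  exists (Cyc c0); split; [exact: primC | exact: MES_cyc | exact: occ_s_c0 |
    exact: all_occ_extend_c0 | exact: MES_c0_unique].
have [[n1 un1] [n2 un2]] := uncommon_both_sides uncommon_t.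
have [r [common_lt uncommon_r]] :=
  least_counterexample (P := fun n : nat => common_offset n) un1.
have [a [common_neg uncommon_a]] :=
  least_counterexample (P := fun n : nat => common_offset (- n.+1%:Z)) un2.
have window_common t' : - a%:Z <= t' < r%:Z -> common_offset t'.
  case/andP=> lo hi; case: (ltrP t' 0) => t'_sign.
    have -> : t' = - (absz t').-1.+1%:Z by lia.
    by apply: common_neg; lia.
  have -> : t' = absz t' by lia.
  by apply: common_lt; lia.
exists (Fin (window r a)); split=> //; [exact: MES_window | exact: occ_s_window |
  exact: all_occ_extend_window | exact: MES_window_unique].
Qed.

End MESOfSubstring.

Theorem theorem10 (Sigma : finType) (C : seq Sigma -> Prop)
  (hC : chromosome_set C) (s : seq Sigma) :
  0 < size s -> substring_of_set C (Fin s) ->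
  exists m : str Sigma,
    [/\ wf_str m, MES C m, occ (Fin s) m = 1, all_occ_extend C s m &
      forall m' : str Sigma, wf_str m' -> MES C m' -> occ (Fin s) m' = 1 ->
        all_occ_extend C s m' -> str_eq m' m].
Proof.
move=> s_gt0 [c0 C_c0 /count_iota_gt0P [i0 i0_lt s_c0]].
have x0 : Sigma by case: (s) s_gt0 => [|x].
exact: (MES_exists_unique x0 hC C_c0 i0_lt s_c0).
Qed.
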